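(* Let $a\in\mathbb{D}$ and $\mathcal{T}\in\{\mathbb{T},\{a\}\}$. For each pair of distinct points $x_1,x_2\in X_{\mathcal{T}}=\mathcal{T}\times\partial\widehat{H^\infty}\times\mathbb{T}$ there exists $\tilde f\in B_{\mathcal{T}}$ such that $\tilde f(x_1)\neq\tilde f(x_2)$.
   Context: $\mathbb{D}$ is the open unit disc and $\mathbb{T}$ the unit circle. $H^\infty$ is the Banach algebra of bounded analytic functions on $\mathbb{D}$ with the supremum norm, $\mathcal{M}$ its maximal ideal space with the Gelfand (weak* ) topology, $\hat v$ the Gelfand transform of $v\in H^\infty$, $\widehat{H^\infty}=\{\hat v: v\in H^\infty\}\subset C(\mathcal{M})$, and $\partial\widehat{H^\infty}$ its Shilov boundary. $\mathcal{S}^\infty=\{f\in H(\mathbb{D}): f'\in H^\infty\}$; every $f\in\mathcal{S}^\infty$ extends continuously to the closed disc $\overline{\mathbb{D}}$, and $\hat f$ denotes this extension. For $\mathcal{T}\in\{\mathbb{T},\{a\}\}$, $X_{\mathcal{T}}=\mathcal{T}\times\partial\widehat{H^\infty}\times\mathbb{T}$ with the product topology, and for $f\in\mathcal{S}^\infty$, $\tilde f(z,\eta,w)=\hat f(z)+\widehat{f'}(\eta)\,w$ for $(z,\eta,w)\in X_{\mathcal{T}}$. $B_{\mathcal{T}}=\{\tilde f: f\in\mathcal{S}^\infty\}\subset C(X_{\mathcal{T}})$. *)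

From Stdlib Require Import Reals List.
From Coquelicot Require Import Coquelicot.
Open Scope R_scope.

Definition Disc (z : C) : Prop := Cmod z < 1.
Definition Circle (z : C) : Prop := Cmod z = 1.

Definition cderiv (f : C -> C) (z : C) (l : C) : Prop :=
  @is_derive C_AbsRing C_NormedModule f z l.

(* H^infty: bounded holomorphic functions on D.  Each element is represented
   canonically by a function C -> C which vanishes outside D. *)
Definition Hinf (v : C -> C) : Prop :=
  (forall z, Disc z -> exists l, cderiv v z l) /\
  (exists M : R, forall z, Disc z -> Cmod (v z) <= M) /\
  (forall z, ~ Disc z -> v z = 0%C).

Definition one_H (z : C) : C := if Rlt_dec (Cmod z) 1 then 1%C else 0%C.

(* A functional is a map phi : (C -> C) -> C, normalised to vanish
   on non-elements of H^infty, so that distinct functionals on H^infty are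
   distinct maps. *)
Definition MaxIdeal (phi : (C -> C) -> C) : Prop :=
  (forall v, ~ Hinf v -> phi v = 0%C) /\
  (forall u v, Hinf u -> Hinf v -> phi (fun z => u z + v z)%C = (phi u + phi v)%C) /\
  (forall (c : C) v, Hinf v -> phi (fun z => c * v z)%C = (c * phi v)%C) /\
  (forall u v, Hinf u -> Hinf v -> phi (fun z => u z * v z)%C = (phi u * phi v)%C) /\
  phi one_H = 1%C.

(* Gelfand transform: hat v (phi) = phi v.
   Closedness of E (a subset of M) for the Gelfand (weak-star) topology on M:
   E contains every phi in M all of whose basic weak-star neighbourhoods
   {psi : |psi v_i - phi v_i| < eps, i = 1..n} meet E. *)
Definition closed_M (E : ((C -> C) -> C) -> Prop) : Prop :=
  forall phi, MaxIdeal phi ->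
    (forall (vs : list (C -> C)) (eps : R), 0 < eps ->
       exists psi, E psi /\ List.Forall (fun v => Cmod (phi v - psi v)%C < eps) vs) ->
    E phi.

Definition closed_boundary (E : ((C -> C) -> C) -> Prop) : Prop :=
  (forall phi, E phi -> MaxIdeal phi) /\ closed_M E /\
  (forall v, Hinf v ->
     exists phi0, E phi0 /\ forall phi, MaxIdeal phi -> Cmod (phi v) <= Cmod (phi0 v)).

(* Shilov boundary: the smallest closed boundary, i.e. the intersection of all
   closed boundaries *)
Definition Shilov (phi : (C -> C) -> C) : Prop :=
  MaxIdeal phi /\ forall E, closed_boundary E -> E phi.

(* S^infty with derivative: f holomorphic on D with f' (canonical
   representative g, vanishing off D) in H^infty *)
Definition Sinf_with_deriv (f g : C -> C) : Prop :=
  Hinf g /\ forall z, Disc z -> cderiv f z (g z).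

Definition ext_value (f : C -> C) (z L : C) : Prop :=
  filterlim f (within Disc (locally z)) (locally L).

Definition in_X (T : C -> Prop) (x : C * ((C -> C) -> C) * C) : Prop :=
  let '(z, eta, w) := x in T z /\ Shilov eta /\ Circle w.

From Stdlib Require Import Reals Lra Psatz FunctionalExtensionality Classical.
From Coquelicot Require Import Coquelicot.
Open Scope R_scope.

(* On a polynomial f,
   every eta in M acts as evaluation at s = eta(z), so
   f~(z, eta, w) = f(z) + f'(s) w, and when the z- or the w-coordinates differ a
   polynomial with prescribed critical points separates the points.  When only
   eta differs, pick v in H^infty with eta1(v) <> eta2(v) and let f be a
   primitive of v: by Goursat's lemma for rectangles,
   F(x + iy) = int_0^x v(t) dt + i int_0^y v(x + is) ds is one; it is Lipschitz
   since |F'| <= sup |v|, hence extends continuously to the closed disc. *)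

Local Notation CR := C_R_CompleteNormedModule.

Lemma Cmod_le_Rabs_sum (z : C) : Cmod z <= Rabs (fst z) + Rabs (snd z).
Proof.
  destruct z as [a b]; simpl.
  pose proof (Rabs_pos a); pose proof (Rabs_pos b).
  apply Rsqr_incr_0_var; [| lra].
  unfold Cmod; simpl; rewrite Rsqr_sqrt by nra.
  pose proof (pow2_abs a); pose proof (pow2_abs b); unfold Rsqr; nra.
Qed.

Lemma Rabs_snd_le_Cmod (z : C) : Rabs (snd z) <= Cmod z.
Proof. pose proof (Rmax_Cmod z); pose proof (Rmax_r (Rabs (fst z)) (Rabs (snd z))); lra. Qed.

Lemma norm_CR (z : CR) : norm z = Cmod z.
Proof.
  destruct z as [a b]; unfold norm, Cmod; simpl; unfold prod_norm, norm; simpl; unfold abs; simpl.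
  f_equal; rewrite !Rmult_1_r, <- !Rabs_mult, !Rabs_right by nra; reflexivity.
Qed.

Lemma Cmod_horizontal (t t0 y : R) : Cmod ((t, y) - (t0, y))%C = Rabs (t - t0).
Proof.
  replace ((t, y) - (t0, y))%C with (RtoC (t - t0)) by (apply injective_projections; simpl; ring).
  apply Cmod_R.
Qed.

Lemma Cmod_vertical (s s0 x : R) : Cmod ((x, s) - (x, s0))%C = Rabs (s - s0).
Proof.
  replace ((x, s) - (x, s0))%C with (Ci * RtoC (s - s0))%C by (apply injective_projections; simpl; ring).
  rewrite Cmod_mult, Cmod_Ci, Cmod_R; ring.
Qed.

Lemma Rabs_coord_diff_le_Cmod (x y x' y' : R) :
  Rabs (x' - x) <= Cmod ((x', y') - (x, y))%C /\ Rabs (y' - y) <= Cmod ((x', y') - (x, y))%C.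
Proof. split; [apply (re_le_Cmod ((x', y') - (x, y))%C) | apply (Rabs_snd_le_Cmod ((x', y') - (x, y))%C)]. Qed.

Lemma pair_re_im (x y : R) : ((x, y) : C) = (RtoC x + Ci * RtoC y)%C.
Proof. apply injective_projections; simpl; ring. Qed.

Lemma Rmult_lt_of_lt_div_plus1 (x K eps : R) : 0 <= K -> x < eps / (K + 1) -> x * (K + 1) < eps.
Proof.
  intros HK Hx; apply Rlt_le_trans with (eps / (K + 1) * (K + 1)); [apply Rmult_lt_compat_r; lra |].
  right; field; lra.
Qed.

Definition ccont (v : C -> C) (z : C) : Prop :=
  forall eps, 0 < eps -> exists del, 0 < del /\
    forall w, Cmod (w - z) < del -> Cmod (v w - v z) < eps.

Definition ex_cderiv (v : C -> C) (z : C) : Prop := exists l, cderiv v z l.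

Lemma continuous_of_Cmod (g : R -> C) (t0 : R) :
  (forall eps, 0 < eps -> exists del, 0 < del /\
     forall t, Rabs (t - t0) < del -> Cmod (g t - g t0) < eps) ->
  continuous (U := CR) g t0.
Proof.
  intros H P [eps HP].
  destruct (H eps (cond_pos eps)) as [del [Hdel Hg]].
  exists (mkposreal del Hdel); intros t Ht; apply HP.
  specialize (Hg t Ht); split.
  - eapply Rle_lt_trans; [apply (re_le_Cmod (g t - g t0)) | exact Hg].
  - eapply Rle_lt_trans; [apply (Rabs_snd_le_Cmod (g t - g t0)) | exact Hg].
Qed.

Lemma cderiv_Cmod (v : C -> C) (z l : C) :
  cderiv v z l <-> forall eps, 0 < eps -> exists del, 0 < del /\
    forall w, Cmod (w - z) < del -> Cmod (v w - v z - l * (w - z)) <= eps * Cmod (w - z).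
Proof.
  assert (E : forall w, (v w - v z - l * (w - z))%C = minus (minus (v w) (v z)) (scal (minus w z) l))
    by (intros w; apply injective_projections; simpl; ring).
  split.
  - intros [_ H] eps He.
    destruct (H z (fun P HP => HP) (mkposreal eps He)) as [del Hdel].
    exists del; split; [apply cond_pos |].
    intros w Hw; rewrite E; exact (Hdel w Hw).
  - intros H; split; [apply is_linear_scal_l |].
    intros x Hx.
    apply (is_filter_lim_locally_unique (K := C_AbsRing) (V := AbsRing_NormedModule C_AbsRing)) in Hx.
    subst x; intros eps.
    destruct (H eps (cond_pos eps)) as [del [Hdel Hw]].
    exists (mkposreal del Hdel); intros w Hb.
    specialize (Hw w Hb); rewrite E in Hw; exact Hw.
Qed.

Lemma cderiv_of_is_derive (f : C -> C) (z l : C) :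
  is_derive (K := C_AbsRing) (V := AbsRing_NormedModule C_AbsRing) f z l -> cderiv f z l.
Proof.
  intros [_ H]; apply cderiv_Cmod; intros eps He.
  destruct (H z (fun P HP => HP) (mkposreal eps He)) as [del Hdel].
  exists del; split; [apply cond_pos |]; intros w Hw; specialize (Hdel w Hw).
  replace (f w - f z - l * (w - z))%C with (minus (minus (f w) (f z)) (scal (minus w z) l))
    by (apply injective_projections; simpl; ring).
  exact Hdel.
Qed.

Lemma ccont_of_cderiv (v : C -> C) (z : C) : ex_cderiv v z -> ccont v z.
Proof.
  intros [l Hl] eps He.
  destruct (proj1 (cderiv_Cmod v z l) Hl 1 Rlt_0_1) as [del [Hdel Hw]].
  pose proof (Cmod_ge_0 l).
  exists (Rmin del (eps / (Cmod l + 1))); split.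
  { apply Rmin_pos; [lra | apply Rdiv_lt_0_compat; lra]. }
  intros w Hw'.
  pose proof (Rmin_l del (eps / (Cmod l + 1))); pose proof (Rmin_r del (eps / (Cmod l + 1))).
  specialize (Hw w ltac:(lra)).
  pose proof (Rmult_lt_of_lt_div_plus1 (Cmod (w - z)) (Cmod l) eps ltac:(lra) ltac:(lra)).
  replace (v w - v z)%C with ((v w - v z - l * (w - z)) + l * (w - z))%C by ring.
  eapply Rle_lt_trans; [apply Cmod_triangle |].
  rewrite Cmod_mult; pose proof (Cmod_ge_0 (w - z)); nra.
Qed.

Lemma ccont_minus (f g : C -> C) (z : C) :
  ccont f z -> ccont g z -> ccont (fun w => f w - g w)%C z.
Proof.
  intros Hf Hg eps He.
  destruct (Hf (eps / 2) ltac:(lra)) as [d1 [Hd1 H1]].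
  destruct (Hg (eps / 2) ltac:(lra)) as [d2 [Hd2 H2]].
  exists (Rmin d1 d2); split; [apply Rmin_pos; auto |].
  intros w Hw; pose proof (Rmin_l d1 d2); pose proof (Rmin_r d1 d2).
  specialize (H1 w ltac:(lra)); specialize (H2 w ltac:(lra)).
  replace (f w - g w - (f z - g z))%C with ((f w - f z) + - (g w - g z))%C by ring.
  eapply Rle_lt_trans; [apply Cmod_triangle |]; rewrite Cmod_opp; lra.
Qed.

Lemma ccont_affine (al be z : C) : ccont (fun w => al + be * w)%C z.
Proof.
  apply ccont_of_cderiv; exists be.
  apply cderiv_Cmod; intros eps He; exists 1; split; [lra |]; intros w _; cbv beta.
  replace (al + be * w - (al + be * z) - be * (w - z))%C with (RtoC 0) by ring.
  rewrite Cmod_0; pose proof (Cmod_ge_0 (w - z)); nra.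
Qed.

(** * Goursat's lemma for rectangles *)

(* [rect v a b c d] is the contour integral of [v] along the boundary of
   [a,b] x [c,d], run counterclockwise. *)
Definition hint (v : C -> C) (y a b : R) : C := RInt (V := CR) (fun t => v (t, y)) a b.
Definition vint (v : C -> C) (x c d : R) : C := RInt (V := CR) (fun s => v (x, s)) c d.
Definition rect (v : C -> C) (a b c d : R) : C :=
  (hint v c a b - hint v d a b + Ci * (vint v b c d - vint v a c d))%C.

Definition box_ccont (v : C -> C) (a b c d : R) : Prop :=
  forall x y, a <= x <= b -> c <= y <= d -> ccont v (x, y).

Lemma ex_RInt_horizontal (v : C -> C) (y a b : R) :
  (forall t, Rmin a b <= t <= Rmax a b -> ccont v (t, y)) ->
  ex_RInt (V := CR) (fun t => v (t, y)) a b.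
Proof.
  intros H; apply ex_RInt_continuous; intros t0 Ht0; apply continuous_of_Cmod.
  intros eps He; destruct (H t0 Ht0 eps He) as [del [Hdel Hw]].
  exists del; split; [exact Hdel |]; intros t Ht; apply Hw; rewrite Cmod_horizontal; exact Ht.
Qed.

Lemma ex_RInt_vertical (v : C -> C) (x c d : R) :
  (forall s, Rmin c d <= s <= Rmax c d -> ccont v (x, s)) ->
  ex_RInt (V := CR) (fun s => v (x, s)) c d.
Proof.
  intros H; apply ex_RInt_continuous; intros s0 Hs0; apply continuous_of_Cmod.
  intros eps He; destruct (H s0 Hs0 eps He) as [del [Hdel Hw]].
  exists del; split; [exact Hdel |]; intros s Hs; apply Hw; rewrite Cmod_vertical; exact Hs.
Qed.

Lemma ex_RInt_box_horizontal (v : C -> C) (a b c d y : R) :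
  a <= b -> box_ccont v a b c d -> c <= y <= d -> ex_RInt (V := CR) (fun t => v (t, y)) a b.
Proof.
  intros Hab Hv Hy; apply ex_RInt_horizontal; rewrite Rmin_left, Rmax_right by exact Hab.
  intros t Ht; apply Hv; assumption.
Qed.

Lemma ex_RInt_box_vertical (v : C -> C) (a b c d x : R) :
  c <= d -> box_ccont v a b c d -> a <= x <= b -> ex_RInt (V := CR) (fun s => v (x, s)) c d.
Proof.
  intros Hcd Hv Hx; apply ex_RInt_vertical; rewrite Rmin_left, Rmax_right by exact Hcd.
  intros s Hs; apply Hv; assumption.
Qed.

Lemma Cmod_RInt_le (f : R -> C) (a b M : R) : ex_RInt (V := CR) f a b ->
  (forall t, Rmin a b <= t <= Rmax a b -> Cmod (f t) <= M) ->
  Cmod (RInt (V := CR) f a b) <= Rabs (b - a) * M.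
Proof.
  intros Hf HM; rewrite <- norm_CR.
  apply (norm_RInt_le_const_abs (V := CR) f a b); [| apply (RInt_correct (V := CR)), Hf].
  intros t Ht; rewrite norm_CR; exact (HM t Ht).
Qed.

Lemma rect_swap_x (v : C -> C) (a b c d : R) :
  ex_RInt (V := CR) (fun t => v (t, c)) a b -> ex_RInt (V := CR) (fun t => v (t, d)) a b ->
  rect v b a c d = (- rect v a b c d)%C.
Proof.
  intros Hc Hd; unfold rect, hint.
  rewrite <- (opp_RInt_swap (V := CR) _ a b Hc), <- (opp_RInt_swap (V := CR) _ a b Hd).
  change opp with Copp; ring.
Qed.

Lemma rect_swap_y (v : C -> C) (a b c d : R) :
  ex_RInt (V := CR) (fun s => v (a, s)) c d -> ex_RInt (V := CR) (fun s => v (b, s)) c d ->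
  rect v a b d c = (- rect v a b c d)%C.
Proof.
  intros Ha Hb; unfold rect, vint.
  rewrite <- (opp_RInt_swap (V := CR) _ c d Ha), <- (opp_RInt_swap (V := CR) _ c d Hb).
  change opp with Copp; ring.
Qed.

Lemma rect_split (v : C -> C) (a b c d : R) : a <= b -> c <= d -> box_ccont v a b c d ->
  let m := (a + b) / 2 in let n := (c + d) / 2 in
  rect v a b c d = (rect v a m c n + rect v m b c n + rect v a m n d + rect v m b n d)%C.
Proof.
  intros Hab Hcd Hv m n.
  assert (Eh : forall y, c <= y <= d -> (hint v y a m + hint v y m b)%C = hint v y a b).
  { intros y Hy; apply (RInt_Chasles (V := CR));
      [apply (ex_RInt_box_horizontal v a m c d) | apply (ex_RInt_box_horizontal v m b c d)];
      try (intros x y' Hx Hy'; apply Hv); unfold m in *; lra. }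
  assert (Ev : forall x, a <= x <= b -> (vint v x c n + vint v x n d)%C = vint v x c d).
  { intros x Hx; apply (RInt_Chasles (V := CR));
      [apply (ex_RInt_box_vertical v a b c n) | apply (ex_RInt_box_vertical v a b n d)];
      try (intros x' y Hx' Hy; apply Hv); unfold n in *; lra. }
  unfold rect; rewrite <- (Eh c), <- (Eh d), <- (Ev a), <- (Ev b) by (unfold m, n; lra).
  ring.
Qed.

Lemma is_RInt_affine_R (r s a b : R) :
  is_RInt (fun t => r + s * t) a b (r * (b - a) + s * (b ^ 2 - a ^ 2) / 2).
Proof.
  assert (H := is_RInt_derive (V := R_CompleteNormedModule)
                 (fun t => r * t + s * t ^ 2 / 2) (fun t => r + s * t) a b).
  match type of H with _ -> _ -> is_RInt _ _ _ ?l =>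
    replace (r * (b - a) + s * (b ^ 2 - a ^ 2) / 2) with l end.
  - apply H.
    + intros x _; auto_derive; [auto | field].
    + intros x _; apply (ex_derive_continuous (K := R_AbsRing) (V := R_NormedModule)); auto_derive; auto.
  - unfold minus, plus, opp; simpl; field.
Qed.

Lemma is_RInt_affine_C (p q : C) (a b : R) :
  is_RInt (V := CR) (fun t => (p + q * RtoC t)%C) a b
    (p * RtoC (b - a) + q * RtoC ((b ^ 2 - a ^ 2) / 2))%C.
Proof.
  replace (p * RtoC (b - a) + q * RtoC ((b ^ 2 - a ^ 2) / 2))%C
    with ((fst p * (b - a) + fst q * (b ^ 2 - a ^ 2) / 2),
          (snd p * (b - a) + snd q * (b ^ 2 - a ^ 2) / 2))
    by (apply injective_projections; simpl; field).
  apply (is_RInt_fct_extend_pair (U := R_NormedModule) (V := R_NormedModule));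
    (eapply is_RInt_ext; [| apply is_RInt_affine_R]); intros x _; simpl; ring.
Qed.

Lemma rect_affine (al be : C) (a b c d : R) : rect (fun z => al + be * z)%C a b c d = 0%C.
Proof.
  unfold rect, hint, vint.
  assert (Eh : forall y, RInt (V := CR) (fun t => (al + be * (t, y))%C) a b =
     ((al + be * (0, y)) * RtoC (b - a) + be * RtoC ((b ^ 2 - a ^ 2) / 2))%C).
  { intros y; apply (is_RInt_unique (V := CR)); eapply is_RInt_ext; [| apply is_RInt_affine_C].
    intros x _; apply injective_projections; simpl; ring. }
  assert (Ev : forall x, RInt (V := CR) (fun s => (al + be * (x, s))%C) c d =
     ((al + be * (x, 0)) * RtoC (d - c) + (be * Ci) * RtoC ((d ^ 2 - c ^ 2) / 2))%C).
  { intros x; apply (is_RInt_unique (V := CR)); eapply is_RInt_ext; [| apply is_RInt_affine_C].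
    intros y _; apply injective_projections; simpl; ring. }
  rewrite !Eh, !Ev; apply injective_projections; simpl; ring.
Qed.

Lemma rect_minus (f g : C -> C) (a b c d : R) : a <= b -> c <= d ->
  box_ccont f a b c d -> box_ccont g a b c d ->
  rect (fun z => f z - g z)%C a b c d = (rect f a b c d - rect g a b c d)%C.
Proof.
  intros Hab Hcd Hf Hg.
  assert (Eh : forall y, c <= y <= d ->
    hint (fun z => f z - g z)%C y a b = (hint f y a b - hint g y a b)%C).
  { intros y Hy; apply (RInt_minus (V := CR) (fun t => f (t, y)) (fun t => g (t, y)));
      [apply (ex_RInt_box_horizontal f a b c d) | apply (ex_RInt_box_horizontal g a b c d)]; auto. }
  assert (Ev : forall x, a <= x <= b ->
    vint (fun z => f z - g z)%C x c d = (vint f x c d - vint g x c d)%C).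
  { intros x Hx; apply (RInt_minus (V := CR) (fun s => f (x, s)) (fun s => g (x, s)));
      [apply (ex_RInt_box_vertical f a b c d) | apply (ex_RInt_box_vertical g a b c d)]; auto. }
  unfold rect at 1; rewrite !Eh, !Ev by lra; unfold rect; ring.
Qed.

Lemma rect_bound (v : C -> C) (a b c d K : R) : a <= b -> c <= d -> box_ccont v a b c d ->
  (forall x y, a <= x <= b -> c <= y <= d -> Cmod (v (x, y)) <= K) ->
  Cmod (rect v a b c d) <= 2 * ((b - a) + (d - c)) * K.
Proof.
  intros Hab Hcd Hv HK.
  assert (Bh : forall y, c <= y <= d -> Cmod (hint v y a b) <= (b - a) * K).
  { intros y Hy; rewrite <- (Rabs_right (b - a)) by lra.
    apply Cmod_RInt_le; [apply (ex_RInt_box_horizontal v a b c d); auto |].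
    rewrite Rmin_left, Rmax_right by lra; intros t Ht; apply HK; auto. }
  assert (Bv : forall x, a <= x <= b -> Cmod (vint v x c d) <= (d - c) * K).
  { intros x Hx; rewrite <- (Rabs_right (d - c)) by lra.
    apply Cmod_RInt_le; [apply (ex_RInt_box_vertical v a b c d); auto |].
    rewrite Rmin_left, Rmax_right by lra; intros s Hs; apply HK; auto. }
  pose proof (Bh c ltac:(lra)); pose proof (Bh d ltac:(lra)).
  pose proof (Bv a ltac:(lra)); pose proof (Bv b ltac:(lra)).
  unfold rect, Cminus.
  eapply Rle_trans; [apply Cmod_triangle |]; rewrite Cmod_mult, Cmod_Ci, Rmult_1_l.
  pose proof (Cmod_triangle (hint v c a b) (- hint v d a b)).
  pose proof (Cmod_triangle (vint v b c d) (- vint v a c d)).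
  rewrite !Cmod_opp in *; lra.
Qed.

(* Subtracting the affine part of [v] at [p] changes no contour integral, and
   what is left is [eps]-small relative to the size of the box. *)
Lemma rect_le_of_deriv_error (v : C -> C) (p l : C) (eps a b c d : R) : 0 <= eps ->
  a <= fst p <= b -> c <= snd p <= d -> box_ccont v a b c d ->
  (forall x y, a <= x <= b -> c <= y <= d ->
     Cmod (v (x, y) - v p - l * ((x, y) - p)) <= eps * Cmod ((x, y) - p)) ->
  Cmod (rect v a b c d) <= 2 * eps * ((b - a) + (d - c)) ^ 2.
Proof.
  intros He Hpx Hpy Hv Herr.
  set (aff := fun z => (v p - l * p + l * z)%C).
  assert (Haff : box_ccont aff a b c d) by (intros x y _ _; apply ccont_affine).
  replace (rect v a b c d) with (rect (fun z => v z - aff z)%C a b c d).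
  2:{ rewrite (rect_minus v aff) by (assumption || lra); unfold aff; rewrite rect_affine; ring. }
  apply Rle_trans with (2 * ((b - a) + (d - c)) * (eps * ((b - a) + (d - c)))); [| right; ring].
  apply rect_bound; try lra.
  - intros x y Hx Hy; apply ccont_minus; [apply Hv | apply Haff]; auto.
  - intros x y Hx Hy; unfold aff.
    replace (v (x, y) - (v p - l * p + l * (x, y)))%C with (v (x, y) - v p - l * ((x, y) - p))%C by ring.
    eapply Rle_trans; [apply Herr; auto | apply Rmult_le_compat_l; [exact He |]].
    eapply Rle_trans; [apply Cmod_le_Rabs_sum |]; destruct p as [px py]; simpl in *.
    assert (Rabs (x + - px) <= b - a) by (apply Rabs_le; lra).
    assert (Rabs (y + - py) <= d - c) by (apply Rabs_le; lra).
    lra.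
Qed.

Record box := Box { bx0 : R; bx1 : R; by0 : R; by1 : R }.

Definition box_rect (v : C -> C) (r : box) : C := rect v (bx0 r) (bx1 r) (by0 r) (by1 r).

Definition quadrant (r : box) (right top : bool) : box :=
  let mx := (bx0 r + bx1 r) / 2 in
  let my := (by0 r + by1 r) / 2 in
  Box (if right then mx else bx0 r) (if right then bx1 r else mx)
      (if top then my else by0 r) (if top then by1 r else my).

Lemma quadrant_spec (r : box) (right top : bool) :
  bx0 r <= bx1 r -> by0 r <= by1 r ->
  let q := quadrant r right top in
  bx0 r <= bx0 q /\ bx1 q <= bx1 r /\ bx1 q - bx0 q = (bx1 r - bx0 r) / 2 /\
  by0 r <= by0 q /\ by1 q <= by1 r /\ by1 q - by0 q = (by1 r - by0 r) / 2.
Proof. intros Hx Hy; destruct right, top; simpl; repeat split; lra. Qed.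

Lemma box_rect_quadrants (v : C -> C) (r : box) :
  bx0 r <= bx1 r -> by0 r <= by1 r -> box_ccont v (bx0 r) (bx1 r) (by0 r) (by1 r) ->
  Cmod (box_rect v r) <=
    Cmod (box_rect v (quadrant r false false)) + Cmod (box_rect v (quadrant r true false)) +
    Cmod (box_rect v (quadrant r false true)) + Cmod (box_rect v (quadrant r true true)).
Proof.
  intros Hx Hy Hv; unfold box_rect at 1; rewrite (rect_split v _ _ _ _ Hx Hy Hv).
  eapply Rle_trans; [apply Cmod_triangle |].
  eapply Rle_trans; [apply Rplus_le_compat_r, Cmod_triangle |].
  eapply Rle_trans; [apply Rplus_le_compat_r, Rplus_le_compat_r, Cmod_triangle |].
  right; reflexivity.
Qed.

Definition bisect (v : C -> C) (r : box) : box :=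
  let large q := Rle_dec (Cmod (box_rect v r) / 4) (Cmod (box_rect v q)) in
  if large (quadrant r false false) then quadrant r false false
  else if large (quadrant r true false) then quadrant r true false
  else if large (quadrant r false true) then quadrant r false true
  else quadrant r true true.

Lemma bisect_quadrant (v : C -> C) (r : box) :
  exists right top, bisect v r = quadrant r right top.
Proof. unfold bisect; repeat destruct Rle_dec; eauto. Qed.

Lemma bisect_large (v : C -> C) (r : box) :
  bx0 r <= bx1 r -> by0 r <= by1 r -> box_ccont v (bx0 r) (bx1 r) (by0 r) (by1 r) ->
  Cmod (box_rect v r) <= 4 * Cmod (box_rect v (bisect v r)).
Proof.
  intros Hx Hy Hv; pose proof (box_rect_quadrants v r Hx Hy Hv).
  unfold bisect; repeat destruct Rle_dec; lra.
Qed.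

Lemma bisect_geom (v : C -> C) (r : box) :
  bx0 r <= bx1 r -> by0 r <= by1 r ->
  let s := bisect v r in
  bx0 r <= bx0 s /\ bx1 s <= bx1 r /\ bx1 s - bx0 s = (bx1 r - bx0 r) / 2 /\
  by0 r <= by0 s /\ by1 s <= by1 r /\ by1 s - by0 s = (by1 r - by0 r) / 2.
Proof.
  intros Hx Hy; destruct (bisect_quadrant v r) as (right & top & ->).
  exact (quadrant_spec r right top Hx Hy).
Qed.

Lemma nested_intervals (lo hi : nat -> R) :
  (forall n, lo n <= lo (S n)) -> (forall n, hi (S n) <= hi n) -> (forall n, lo n <= hi n) ->
  exists p, forall n, lo n <= p <= hi n.
Proof.
  intros Hlo Hhi Hle.
  assert (Hcross : forall m n, lo m <= hi n).
  { intros m n.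
    pose proof (growing_prop lo (Nat.max m n) m Hlo (Nat.le_max_l m n)).
    pose proof (decreasing_prop hi n (Nat.max m n) Hhi (Nat.le_max_r m n)).
    pose proof (Hle (Nat.max m n)); lra. }
  destruct (completeness (fun x => exists n, x = lo n)) as [p [Hub Hlub]].
  - exists (hi 0%nat); intros x [n ->]; apply Hcross.
  - exists (lo 0%nat), 0%nat; reflexivity.
  - exists p; intros n; split.
    + apply Hub; exists n; reflexivity.
    + apply Hlub; intros x [m ->]; apply Hcross.
Qed.

Lemma exists_pow2_lt (S del : R) : 0 < del -> exists n, S / 2 ^ n < del.
Proof.
  intros Hdel.
  destruct (Pow_x_infinity 2 ltac:(rewrite Rabs_right; lra) (Rabs S / del + 1)) as [N HN].
  exists N; specialize (HN N (le_n N)).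
  assert (H2 : 0 < 2 ^ N) by (apply pow_lt; lra).
  rewrite Rabs_right in HN by lra.
  apply Rmult_lt_reg_r with (2 ^ N); [exact H2 |].
  replace (S / 2 ^ N * 2 ^ N) with S by (field; lra).
  assert (Rabs S < del * 2 ^ N).
  { apply Rmult_lt_reg_r with (/ del); [apply Rinv_0_lt_compat, Hdel |].
    replace (del * 2 ^ N * / del) with (2 ^ N) by (field; lra); unfold Rdiv in HN; lra. }
  pose proof (Rle_abs S); lra.
Qed.

Lemma Rle_mult_eps_eq_0 (x K : R) : 0 <= x -> (forall eps, 0 < eps -> x <= K * eps) -> x = 0.
Proof.
  intros Hx H; apply Rle_antisym; [| exact Hx].
  apply Rle_plus_epsilon; intros eps He; rewrite Rplus_0_l.
  pose proof (Rabs_pos K); pose proof (Rle_abs K).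
  eapply Rle_trans; [apply (H (eps / (Rabs K + 1))), Rdiv_lt_0_compat; lra |].
  apply Rmult_le_reg_r with (Rabs K + 1); [lra |].
  replace (K * (eps / (Rabs K + 1)) * (Rabs K + 1)) with (K * eps) by (field; lra).
  nra.
Qed.

Definition bisections (v : C -> C) (r : box) (n : nat) : box := Nat.iter n (bisect v) r.

Lemma bisections_spec (v : C -> C) (a b c d : R) : a <= b -> c <= d -> box_ccont v a b c d ->
  forall n, let r := bisections v (Box a b c d) n in
    a <= bx0 r /\ bx1 r <= b /\ bx1 r - bx0 r = (b - a) / 2 ^ n /\
    c <= by0 r /\ by1 r <= d /\ by1 r - by0 r = (d - c) / 2 ^ n /\
    Cmod (rect v a b c d) <= (2 ^ n) ^ 2 * Cmod (box_rect v r).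
Proof.
  intros Hab Hcd Hv n; cbv zeta.
  induction n as [| n IH]; [simpl; unfold box_rect; simpl; repeat split; lra |].
  destruct IH as (I1 & I2 & I3 & I4 & I5 & I6 & I7).
  assert (Hpow : 0 < 2 ^ n) by (apply pow_lt; lra).
  assert (0 <= (b - a) / 2 ^ n) by (apply Rdiv_le_0_compat; lra).
  assert (0 <= (d - c) / 2 ^ n) by (apply Rdiv_le_0_compat; lra).
  set (r := bisections v (Box a b c d) n) in *.
  destruct (bisect_geom v r) as (G1 & G2 & G3 & G4 & G5 & G6); [lra | lra |].
  assert (G7 : Cmod (box_rect v r) <= 4 * Cmod (box_rect v (bisect v r)))
    by (apply bisect_large; try lra; intros x y Hx Hy; apply Hv; lra).
  change (bisections v (Box a b c d) (S n)) with (bisect v r).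
  replace (2 ^ S n) with (2 * 2 ^ n) by reflexivity; rewrite G3, G6, I3, I6.
  repeat split; try lra; try (field; lra).
  eapply Rle_trans; [exact I7 |].
  replace ((2 * 2 ^ n) ^ 2) with ((2 ^ n) ^ 2 * 4) by ring; rewrite Rmult_assoc.
  apply Rmult_le_compat_l; [nra | exact G7].
Qed.

Lemma bisections_common_point (v : C -> C) (a b c d : R) : a <= b -> c <= d ->
  box_ccont v a b c d -> exists px py, forall n, let r := bisections v (Box a b c d) n in
    bx0 r <= px <= bx1 r /\ by0 r <= py <= by1 r.
Proof.
  intros Hab Hcd Hv.
  set (r := bisections v (Box a b c d)).
  assert (Hord : forall n, bx0 (r n) <= bx1 (r n) /\ by0 (r n) <= by1 (r n)).
  { intros n; destruct (bisections_spec v a b c d Hab Hcd Hv n) as (_ & _ & I3 & _ & _ & I6 & _).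
    assert (0 < 2 ^ n) by (apply pow_lt; lra).
    assert (0 <= (b - a) / 2 ^ n) by (apply Rdiv_le_0_compat; lra).
    assert (0 <= (d - c) / 2 ^ n) by (apply Rdiv_le_0_compat; lra).
    fold r in I3, I6; lra. }
  assert (Hstep : forall n, let s := r (S n) in
    bx0 (r n) <= bx0 s /\ bx1 s <= bx1 (r n) /\ by0 (r n) <= by0 s /\ by1 s <= by1 (r n)).
  { intros n; destruct (Hord n) as [Hx Hy].
    destruct (bisect_geom v (r n) Hx Hy) as (G1 & G2 & _ & G4 & G5 & _); auto. }
  destruct (nested_intervals (fun n => bx0 (r n)) (fun n => bx1 (r n))) as [px Hpx];
    try (intros n; apply Hstep); try (intros n; apply Hord).
  destruct (nested_intervals (fun n => by0 (r n)) (fun n => by1 (r n))) as [py Hpy];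
    try (intros n; apply Hstep); try (intros n; apply Hord).
  exists px, py; intros n; split; [apply Hpx | apply Hpy].
Qed.

(* The bisected boxes shrink to a point [p] and carry at least [4^-n] of the
   contour integral, while differentiability at [p] makes their integrals
   [o(4^-n)]. *)
Lemma goursat (v : C -> C) (a b c d : R) : a <= b -> c <= d ->
  (forall x y, a <= x <= b -> c <= y <= d -> ex_cderiv v (x, y)) -> rect v a b c d = 0%C.
Proof.
  intros Hab Hcd Hd.
  assert (Hv : box_ccont v a b c d) by (intros x y Hx Hy; apply ccont_of_cderiv, Hd; auto).
  pose proof (bisections_spec v a b c d Hab Hcd Hv) as Inv.
  destruct (bisections_common_point v a b c d Hab Hcd Hv) as (px & py & Hp).
  set (r := bisections v (Box a b c d)) in *.
  destruct (Hd px py) as [l Hl]; [destruct (Hp 0%nat) as [? ?]; simpl in *; lra .. |].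
  set (S := (b - a) + (d - c)).
  apply Cmod_eq_0, (Rle_mult_eps_eq_0 _ (2 * S ^ 2)); [apply Cmod_ge_0 |].
  intros eps He.
  destruct (proj1 (cderiv_Cmod v (px, py) l) Hl eps He) as [del [Hdel Hw]].
  destruct (exists_pow2_lt S del Hdel) as [n Hn].
  destruct (Inv n) as (I1 & I2 & I3 & I4 & I5 & I6 & I7); destruct (Hp n) as [Hpx Hpy].
  assert (Hpow : 0 < 2 ^ n) by (apply pow_lt; lra).
  assert (Hsize : bx1 (r n) - bx0 (r n) + (by1 (r n) - by0 (r n)) = S / 2 ^ n)
    by (rewrite I3, I6; unfold S; field; lra).
  assert (Hrn : Cmod (box_rect v (r n)) <= 2 * eps * (S / 2 ^ n) ^ 2).
  { rewrite <- Hsize; unfold box_rect.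
    apply (rect_le_of_deriv_error v (px, py) l eps (bx0 (r n)) (bx1 (r n)) (by0 (r n)) (by1 (r n)));
      simpl; try lra.
    - intros x y Hx Hy; apply Hv; lra.
    - intros x y Hx Hy; apply Hw.
      eapply Rle_lt_trans; [apply Cmod_le_Rabs_sum |]; simpl.
      assert (Rabs (x + - px) <= bx1 (r n) - bx0 (r n)) by (apply Rabs_le; lra).
      assert (Rabs (y + - py) <= by1 (r n) - by0 (r n)) by (apply Rabs_le; lra).
      lra. }
  eapply Rle_trans; [exact I7 |].
  replace (2 * S ^ 2 * eps) with ((2 ^ n) ^ 2 * (2 * eps * (S / 2 ^ n) ^ 2)) by (field; lra).
  apply Rmult_le_compat_l; [nra | exact Hrn].
Qed.

Lemma rect_eq_0 (v : C -> C) (a b c d : R) :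
  (forall x y, Rmin a b <= x <= Rmax a b -> Rmin c d <= y <= Rmax c d -> ex_cderiv v (x, y)) ->
  rect v a b c d = 0%C.
Proof.
  intros Hd.
  assert (Hh : forall y, Rmin c d <= y <= Rmax c d -> ex_RInt (V := CR) (fun t => v (t, y)) a b)
    by (intros y Hy; apply ex_RInt_horizontal; intros t Ht; apply ccont_of_cderiv, Hd; auto).
  assert (Hv : forall x, Rmin a b <= x <= Rmax a b -> ex_RInt (V := CR) (fun s => v (x, s)) c d)
    by (intros x Hx; apply ex_RInt_vertical; intros s Hs; apply ccont_of_cderiv, Hd; auto).
  assert (Hx : Rmin a b <= a <= Rmax a b /\ Rmin a b <= b <= Rmax a b)
    by (split; split; auto using Rmin_l, Rmin_r, Rmax_l, Rmax_r).
  assert (Hy : Rmin c d <= c <= Rmax c d /\ Rmin c d <= d <= Rmax c d)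
    by (split; split; auto using Rmin_l, Rmin_r, Rmax_l, Rmax_r).
  assert (Hmin : rect v (Rmin a b) (Rmax a b) (Rmin c d) (Rmax c d) = 0%C)
    by (apply goursat; auto using Rmin_Rmax).
  destruct (Rle_dec a b) as [Hab | Hab], (Rle_dec c d) as [Hcd | Hcd].
  - rewrite Rmin_left, Rmax_right, Rmin_left, Rmax_right in Hmin by lra; exact Hmin.
  - rewrite Rmin_left, Rmax_right, Rmin_right, Rmax_left in Hmin by lra.
    rewrite (rect_swap_y v a b d c), Hmin; [apply Copp_0 | apply ex_RInt_swap, Hv; tauto ..].
  - rewrite Rmin_right, Rmax_left, Rmin_left, Rmax_right in Hmin by lra.
    rewrite (rect_swap_x v b a c d), Hmin; [apply Copp_0 | apply ex_RInt_swap, Hh; tauto ..].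
  - rewrite Rmin_right, Rmax_left, Rmin_right, Rmax_left in Hmin by lra.
    rewrite (rect_swap_x v b a c d), (rect_swap_y v b a d c), Hmin;
      [rewrite !Copp_0; reflexivity | ..];
      apply ex_RInt_swap; first [apply Hv | apply Hh]; tauto.
Qed.

(** * A primitive on the disc *)

Lemma Rabs_le_Rmax_of_between (a b t : R) :
  Rmin a b <= t <= Rmax a b -> Rabs t <= Rmax (Rabs a) (Rabs b).
Proof.
  intros H; pose proof (Rmax_l (Rabs a) (Rabs b)); pose proof (Rmax_r (Rabs a) (Rabs b)).
  pose proof (Rle_abs a); pose proof (Rle_abs b); pose proof (Rle_abs (- a)); pose proof (Rle_abs (- b)).
  rewrite !Rabs_Ropp in *; apply Rabs_le.
  destruct (Rle_dec a b); [rewrite Rmin_left, Rmax_right in H | rewrite Rmin_right, Rmax_left in H]; lra.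
Qed.

Lemma Rabs_sub_le_of_between (a b t : R) :
  Rmin a b <= t <= Rmax a b -> Rabs (t - a) <= Rabs (b - a).
Proof.
  intros H; pose proof (Rle_abs (b - a)); pose proof (Rle_abs (- (b - a))); rewrite Rabs_Ropp in *.
  apply Rabs_le.
  destruct (Rle_dec a b); [rewrite Rmin_left, Rmax_right in H | rewrite Rmin_right, Rmax_left in H]; lra.
Qed.

Lemma Rabs_le_of_between_0 (x t : R) : Rmin 0 x <= t <= Rmax 0 x -> Rabs t <= Rabs x.
Proof.
  intros H; pose proof (Rabs_le_Rmax_of_between _ _ _ H); rewrite Rabs_R0 in *.
  rewrite Rmax_right in * by apply Rabs_pos; assumption.
Qed.

Definition prim (v : C -> C) (z : C) : C := (hint v 0 0 (fst z) + Ci * vint v (fst z) 0 (snd z))%C.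

(* By Goursat on [[x,x'] x [0,y]], the path to [(x',y')] through [(x',0)]
   used by [prim] may be replaced by the one through [(x,y)]. *)
Lemma prim_incr (v : C -> C) (x y x' y' : R) :
  (forall t s, Rabs t <= Rmax (Rabs x) (Rabs x') -> Rabs s <= Rmax (Rabs y) (Rabs y') ->
     ex_cderiv v (t, s)) ->
  (prim v (x', y') - prim v (x, y))%C = (hint v y x x' + Ci * vint v x' y y')%C.
Proof.
  intros Hd.
  assert (Hc : forall t s, Rabs t <= Rmax (Rabs x) (Rabs x') -> Rabs s <= Rmax (Rabs y) (Rabs y') ->
     ccont v (t, s)) by (intros; apply ccont_of_cderiv; auto).
  pose proof (Rmax_l (Rabs x) (Rabs x')); pose proof (Rmax_r (Rabs x) (Rabs x')).
  pose proof (Rmax_l (Rabs y) (Rabs y')); pose proof (Rmax_r (Rabs y) (Rabs y')).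
  pose proof (Rabs_pos x); pose proof (Rabs_pos y); pose proof Rabs_R0.
  assert (Eh : hint v 0 0 x' = (hint v 0 0 x + hint v 0 x x')%C).
  { symmetry; apply (RInt_Chasles (V := CR)); apply ex_RInt_horizontal; intros t Ht; apply Hc; try lra.
    - pose proof (Rabs_le_of_between_0 _ _ Ht); lra.
    - apply Rabs_le_Rmax_of_between; assumption. }
  assert (Ev : vint v x' 0 y' = (vint v x' 0 y + vint v x' y y')%C).
  { symmetry; apply (RInt_Chasles (V := CR)); apply ex_RInt_vertical; intros s Hs; apply Hc; try lra.
    - pose proof (Rabs_le_of_between_0 _ _ Hs); lra.
    - apply Rabs_le_Rmax_of_between; assumption. }
  assert (Hrect : rect v x x' 0 y = 0%C).
  { apply rect_eq_0; intros t s Ht Hs; apply Hd.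
    - apply Rabs_le_Rmax_of_between; assumption.
    - pose proof (Rabs_le_of_between_0 _ _ Hs); lra. }
  unfold rect in Hrect; unfold prim; simpl; rewrite Eh, Ev.
  replace (hint v 0 0 x + hint v 0 x x' + Ci * (vint v x' 0 y + vint v x' y y') -
           (hint v 0 0 x + Ci * vint v x 0 y))%C
    with (hint v y x x' + Ci * vint v x' y y' +
          (hint v 0 x x' - hint v y x x' + Ci * (vint v x' 0 y - vint v x 0 y)))%C by ring.
  rewrite Hrect; ring.
Qed.

Lemma Disc_iff_sq (z : C) : Disc z <-> fst z ^ 2 + snd z ^ 2 < 1.
Proof.
  unfold Disc; rewrite <- Cmod2_alt; pose proof (Cmod_ge_0 z) as Hz.
  split; intros H; [nra |]; apply Rnot_le_lt; intros H'; nra.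
Qed.

Lemma disc_box_nbhd (z : C) : Disc z -> exists r, 0 < r /\
  forall w t s, Cmod (w - z) < r ->
    Rabs t <= Rmax (Rabs (fst z)) (Rabs (fst w)) ->
    Rabs s <= Rmax (Rabs (snd z)) (Rabs (snd w)) -> Disc (t, s).
Proof.
  intros Hz; apply Disc_iff_sq in Hz; destruct z as [x y]; cbn [fst snd] in *.
  set (A := Rabs x + Rabs y); set (q := x ^ 2 + y ^ 2) in *.
  assert (HA : 0 <= A) by (unfold A; pose proof (Rabs_pos x); pose proof (Rabs_pos y); lra).
  assert (Hq0 : 0 <= q) by (unfold q; nra).
  set (r := (1 - q) / (4 * A + 4)).
  assert (Hr : r * (4 * A + 4) = 1 - q) by (unfold r; field; lra).
  assert (Hr0 : 0 < r) by (unfold r; apply Rdiv_lt_0_compat; lra).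
  exists r; split; [exact Hr0 |]; intros [x' y'] t s Hw Ht Hs; cbn [fst snd] in *.
  destruct (Rabs_coord_diff_le_Cmod x y x' y').
  pose proof (Rabs_triang_inv x' x); pose proof (Rabs_triang_inv y' y).
  assert (Htr : Rabs t <= Rabs x + r) by (eapply Rle_trans; [exact Ht | apply Rmax_lub; lra]).
  assert (Hsr : Rabs s <= Rabs y + r) by (eapply Rle_trans; [exact Hs | apply Rmax_lub; lra]).
  apply Disc_iff_sq; cbn [fst snd]; rewrite <- (pow2_abs t), <- (pow2_abs s).
  pose proof (Rabs_pos t); pose proof (Rabs_pos s).
  assert (Rabs t ^ 2 <= (Rabs x + r) ^ 2) by (apply pow_incr; lra).
  assert (Rabs s ^ 2 <= (Rabs y + r) ^ 2) by (apply pow_incr; lra).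
  assert ((Rabs x + r) ^ 2 + (Rabs y + r) ^ 2 = q + 2 * r * A + 2 * r ^ 2)
    by (unfold q, A; rewrite <- (pow2_abs x), <- (pow2_abs y); ring).
  assert (r <= 1 / 4) by nra.
  nra.
Qed.

Lemma Cmod_RInt_minus_const_le (f : R -> C) (c : C) (a b eps : R) : ex_RInt (V := CR) f a b ->
  (forall t, Rmin a b <= t <= Rmax a b -> Cmod (f t - c) <= eps) ->
  Cmod (RInt (V := CR) f a b - RtoC (b - a) * c) <= Rabs (b - a) * eps.
Proof.
  intros Hf Heps.
  replace (RInt (V := CR) f a b - RtoC (b - a) * c)%C with (RInt (V := CR) (fun t => f t - c)%C a b).
  - apply Cmod_RInt_le; [| exact Heps].
    apply (ex_RInt_minus (V := CR) f (fun _ => c)); [exact Hf | apply ex_RInt_const].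
  - rewrite (RInt_minus (V := CR) f (fun _ => c)) by (exact Hf || apply ex_RInt_const).
    rewrite (RInt_const (V := CR)), scal_R_Cmult; reflexivity.
Qed.

Lemma prim_cderiv (v : C -> C) : (forall z, Disc z -> ex_cderiv v z) ->
  forall z, Disc z -> cderiv (prim v) z (v z).
Proof.
  intros Hv z Hz; destruct (disc_box_nbhd z Hz) as [r [Hr Hbox]].
  pose proof (ccont_of_cderiv v z (Hv z Hz)) as Hcz.
  apply cderiv_Cmod; intros eps He.
  destruct (Hcz (eps / 2) ltac:(lra)) as [del [Hdel Hclose]].
  exists (Rmin r (del / 2)); split; [apply Rmin_pos; lra |].
  intros w Hw; pose proof (Rmin_l r (del / 2)); pose proof (Rmin_r r (del / 2)).
  destruct z as [x y], w as [x' y']; simpl in Hbox.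
  destruct (Rabs_coord_diff_le_Cmod x y x' y') as [Hdx Hdy].
  assert (Hreg : forall t s, Rabs t <= Rmax (Rabs x) (Rabs x') -> Rabs s <= Rmax (Rabs y) (Rabs y') ->
     ex_cderiv v (t, s)) by (intros t s Ht Hs; apply Hv, (Hbox (x', y')); cbn [fst snd]; auto; lra).
  assert (Hh : ex_RInt (V := CR) (fun t => v (t, y)) x x').
  { apply ex_RInt_horizontal; intros t Ht; apply ccont_of_cderiv, Hreg;
      [apply Rabs_le_Rmax_of_between; exact Ht | apply Rmax_l]. }
  assert (Hv' : ex_RInt (V := CR) (fun s => v (x', s)) y y').
  { apply ex_RInt_vertical; intros s Hs; apply ccont_of_cderiv, Hreg;
      [apply Rmax_r | apply Rabs_le_Rmax_of_between; exact Hs]. }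
  assert (Bh : Cmod (hint v y x x' - RtoC (x' - x) * v (x, y)) <= Rabs (x' - x) * (eps / 2)).
  { apply Cmod_RInt_minus_const_le; [exact Hh |]; intros t Ht; left; apply Hclose.
    rewrite Cmod_horizontal; pose proof (Rabs_sub_le_of_between _ _ _ Ht); lra. }
  assert (Bv : Cmod (vint v x' y y' - RtoC (y' - y) * v (x, y)) <= Rabs (y' - y) * (eps / 2)).
  { apply Cmod_RInt_minus_const_le; [exact Hv' |]; intros s Hs; left; apply Hclose.
    pose proof (Rabs_sub_le_of_between _ _ _ Hs).
    eapply Rle_lt_trans; [apply Cmod_le_Rabs_sum |]; simpl.
    replace (x' + - x) with (x' - x) by ring; replace (s + - y) with (s - y) by ring; lra. }
  set (W := Cmod ((x', y') - (x, y))%C) in *.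
  rewrite prim_incr by exact Hreg.
  replace (hint v y x x' + Ci * vint v x' y y' - v (x, y) * ((x', y') - (x, y)))%C
    with ((hint v y x x' - RtoC (x' - x) * v (x, y)) +
          Ci * (vint v x' y y' - RtoC (y' - y) * v (x, y)))%C
    by (rewrite (pair_re_im x' y'), (pair_re_im x y), !RtoC_minus; ring).
  eapply Rle_trans; [apply Cmod_triangle |]; rewrite Cmod_mult, Cmod_Ci, Rmult_1_l.
  assert (Rabs (x' - x) * (eps / 2) <= W * (eps / 2)) by (apply Rmult_le_compat_r; lra).
  assert (Rabs (y' - y) * (eps / 2) <= W * (eps / 2)) by (apply Rmult_le_compat_r; lra).
  lra.
Qed.

Lemma is_derive_line (F : C -> C) (z d l : C) (t0 : R) : cderiv F (z + RtoC t0 * d)%C l ->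
  is_derive (K := R_AbsRing) (V := CR) (fun t => F (z + RtoC t * d)%C) t0 (l * d)%C.
Proof.
  intros HF; split; [apply is_linear_scal_l |].
  intros x Hx.
  apply (is_filter_lim_locally_unique (K := R_AbsRing) (V := AbsRing_NormedModule R_AbsRing)) in Hx.
  subst x; intros eps.
  pose proof (Cmod_ge_0 d); pose proof (cond_pos eps).
  destruct (proj1 (cderiv_Cmod F _ l) HF (eps / (Cmod d + 1))) as [del [Hdel Hw]].
  { apply Rdiv_lt_0_compat; lra. }
  exists (mkposreal (del / (Cmod d + 1)) ltac:(apply Rdiv_lt_0_compat; lra)).
  intros t Ht; change (Rabs (t - t0) < del / (Cmod d + 1)) in Ht.
  specialize (Hw (z + RtoC t * d)%C).
  replace (z + RtoC t * d - (z + RtoC t0 * d))%C with (RtoC (t - t0) * d)%C in Hw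
    by (rewrite RtoC_minus; ring).
  rewrite Cmod_mult, Cmod_R in Hw.
  pose proof (Rabs_pos (t - t0)).
  assert (Hlt : Rabs (t - t0) * Cmod d < del)
    by (pose proof (Rmult_lt_of_lt_div_plus1 _ _ _ (Cmod_ge_0 d) Ht); nra).
  specialize (Hw Hlt).
  rewrite norm_CR, scal_R_Cmult; change (norm (minus t t0)) with (Rabs (t - t0)).
  change (Cmod (F (z + RtoC t * d) - F (z + RtoC t0 * d) - RtoC (t - t0) * (l * d))%C
          <= eps * Rabs (t - t0)).
  replace (RtoC (t - t0) * (l * d))%C with (l * (RtoC (t - t0) * d))%C by ring.
  eapply Rle_trans; [exact Hw |].
  assert (eps / (Cmod d + 1) * Cmod d <= eps).
  { apply Rmult_le_reg_r with (Cmod d + 1); [lra |].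
    replace (eps / (Cmod d + 1) * Cmod d * (Cmod d + 1)) with (eps * Cmod d) by (field; lra).
    nra. }
  nra.
Qed.

Lemma ccont_line (g : C -> C) (z d : C) (t0 : R) : ccont g (z + RtoC t0 * d)%C ->
  continuous (U := CR) (fun t => g (z + RtoC t * d)%C) t0.
Proof.
  intros Hg; apply continuous_of_Cmod; intros eps He.
  destruct (Hg eps He) as [del [Hdel Hw]]; pose proof (Cmod_ge_0 d).
  exists (del / (Cmod d + 1)); split; [apply Rdiv_lt_0_compat; lra |].
  intros t Ht; apply Hw.
  replace (z + RtoC t * d - (z + RtoC t0 * d))%C with (RtoC (t - t0) * d)%C by (rewrite RtoC_minus; ring).
  rewrite Cmod_mult, Cmod_R; pose proof (Rabs_pos (t - t0)).
  pose proof (Rmult_lt_of_lt_div_plus1 _ _ _ (Cmod_ge_0 d) Ht); nra.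
Qed.

Lemma ccont_mult_r (v : C -> C) (d z : C) : ccont v z -> ccont (fun w => v w * d)%C z.
Proof.
  intros Hv eps He; pose proof (Cmod_ge_0 d).
  destruct (Hv (eps / (Cmod d + 1)) ltac:(apply Rdiv_lt_0_compat; lra)) as [del [Hdel Hw]].
  exists del; split; [exact Hdel |]; intros w Hwz; specialize (Hw w Hwz).
  replace (v w * d - v z * d)%C with ((v w - v z) * d)%C by ring.
  rewrite Cmod_mult; pose proof (Cmod_ge_0 (v w - v z)).
  pose proof (Rmult_lt_of_lt_div_plus1 _ _ _ (Cmod_ge_0 d) Hw); nra.
Qed.

Lemma Disc_segment (z w : C) (t : R) : Disc z -> Disc w -> 0 <= t <= 1 ->
  Disc (z + RtoC t * (w - z))%C.
Proof.
  unfold Disc; intros Hz Hw Ht.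
  replace (z + RtoC t * (w - z))%C with (RtoC (1 - t) * z + RtoC t * w)%C by (rewrite RtoC_minus; ring).
  eapply Rle_lt_trans; [apply Cmod_triangle |]; rewrite !Cmod_mult, !Cmod_R, !Rabs_right by lra.
  pose proof (Cmod_ge_0 z); pose proof (Cmod_ge_0 w).
  destruct (Req_dec t 1) as [-> | Ht1]; nra.
Qed.

Lemma prim_lipschitz (v : C -> C) (M : R) :
  (forall z, Disc z -> ex_cderiv v z) -> (forall z, Disc z -> Cmod (v z) <= M) ->
  forall z w, Disc z -> Disc w -> Cmod (prim v w - prim v z) <= M * Cmod (w - z).
Proof.
  intros Hv HM z w Hz Hw; set (d := (w - z)%C).
  assert (Hseg : forall t, 0 <= t <= 1 -> Disc (z + RtoC t * d)%C) by (intros; apply Disc_segment; auto).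
  assert (HI : is_RInt (V := CR) (fun t => (v (z + RtoC t * d) * d)%C) 0 1 (prim v w - prim v z)%C).
  { assert (H := is_RInt_derive (V := CR) (fun t => prim v (z + RtoC t * d)%C)
                   (fun t => (v (z + RtoC t * d) * d)%C) 0 1).
    cbv beta in H; replace (z + RtoC 1 * d)%C with w in H by (unfold d; ring).
    replace (z + RtoC 0 * d)%C with z in H by (unfold d; ring).
    apply H; rewrite Rmin_left, Rmax_right by lra; intros t Ht.
    - apply is_derive_line, prim_cderiv; auto.
    - apply (ccont_line (fun u => v u * d)%C), ccont_mult_r, ccont_of_cderiv, Hv, Hseg, Ht. }
  rewrite <- norm_CR.
  apply Rle_trans with ((1 - 0) * (M * Cmod d)); [| right; ring].
  apply (norm_RInt_le_const (V := CR) (fun t => (v (z + RtoC t * d) * d)%C) 0 1); [lra | | exact HI].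
  intros t Ht; rewrite norm_CR, Cmod_mult; apply Rmult_le_compat_r; [apply Cmod_ge_0 | auto].
Qed.

Lemma ball_of_Cmod_lt (z w : C) (e : R) : Cmod (w - z) < e -> ball (M := C_UniformSpace) z e w.
Proof. apply C_NormedModule_mixin_compat1. Qed.

Lemma Cmod_lt_of_ball (z w : C) (e : posreal) :
  ball (M := C_UniformSpace) z e w -> Cmod (w - z) < 2 * e.
Proof.
  intros H; pose proof (C_NormedModule_mixin_compat2 z w e H) as H'; pose proof (cond_pos e).
  assert (sqrt 2 < 2) by (rewrite <- (sqrt_square 2) at 2 by lra; apply sqrt_lt_1; lra).
  change (Cmod (w - z) < sqrt 2 * e) in H'; nra.
Qed.

Lemma Disc_meets_ball (z0 : C) (e : posreal) : Cmod z0 <= 1 ->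
  exists x, Disc x /\ ball (M := C_UniformSpace) z0 e x.
Proof.
  intros Hz; set (s := Rmin (1 / 2) (e / 2)); pose proof (cond_pos e).
  assert (Hs : 0 < s) by (apply Rmin_pos; lra).
  pose proof (Rmin_l (1 / 2) (e / 2)); pose proof (Rmin_r (1 / 2) (e / 2)); pose proof (Cmod_ge_0 z0).
  exists (RtoC (1 - s) * z0)%C; split.
  - unfold Disc; rewrite Cmod_mult, Cmod_R, Rabs_right by (unfold s; lra); unfold s in *; nra.
  - apply ball_of_Cmod_lt.
    replace (RtoC (1 - s) * z0 - z0)%C with (- (RtoC s * z0))%C by (rewrite RtoC_minus; ring).
    rewrite Cmod_opp, Cmod_mult, Cmod_R, Rabs_right by lra; unfold s in *; nra.
Qed.

(* A Lipschitz function on the disc is uniformly Cauchy at every point of the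
   closed disc, and C is complete. *)
Lemma ext_value_of_lipschitz (f : C -> C) (K : R) : 0 <= K ->
  (forall z w, Disc z -> Disc w -> Cmod (f w - f z) <= K * Cmod (w - z)) ->
  forall z0, Cmod z0 <= 1 -> exists L, ext_value f z0 L.
Proof.
  intros HK Hlip z0 Hz0.
  set (G := within Disc (locally (T := C_UniformSpace) z0)).
  assert (FG : Filter G) by (apply within_filter, locally_filter).
  assert (PG : ProperFilter G).
  { constructor; [| exact FG]; intros P [e He].
    destruct (Disc_meets_ball z0 e Hz0) as [x [Hx Hb]]; exists x; apply He; auto. }
  assert (Hcauchy : cauchy (T := C_CompleteNormedModule) (filtermap f G)).
  { intros eps; pose proof (cond_pos eps).
    set (del := mkposreal (eps / (4 * K + 4)) ltac:(apply Rdiv_lt_0_compat; lra)).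
    destruct (Disc_meets_ball z0 del Hz0) as [zs [Hzs Hbs]].
    exists (f zs), del; intros z Hb Hz; apply ball_of_Cmod_lt.
    pose proof (Cmod_lt_of_ball _ _ _ Hb); pose proof (Cmod_lt_of_ball _ _ _ Hbs).
    assert (Cmod (z - zs) < 4 * del).
    { replace (z - zs)%C with ((z - z0) + - (zs - z0))%C by ring.
      eapply Rle_lt_trans; [apply Cmod_triangle |]; rewrite Cmod_opp; lra. }
    assert (4 * K * del < eps).
    { simpl; apply Rmult_lt_reg_r with (4 * K + 4); [lra |].
      replace (4 * K * (eps / (4 * K + 4)) * (4 * K + 4)) with (4 * K * eps) by (field; lra); nra. }
    specialize (Hlip zs z Hzs Hz); pose proof (Cmod_ge_0 (z - zs)%C); nra. }
  assert (PfG : ProperFilter (filtermap f G)) by (apply filtermap_proper_filter; exact PG).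
  exists (lim (T := C_CompleteNormedModule) (filtermap f G)); intros P [eps HP].
  eapply filter_imp;
    [| apply (complete_cauchy (T := C_CompleteNormedModule) (filtermap f G) PfG Hcauchy eps)].
  intros x Hx; apply HP, Hx.
Qed.

Lemma Hinf_primitive (v : C -> C) : Hinf v -> exists F, Sinf_with_deriv F v /\
  forall z, Cmod z <= 1 -> exists L, ext_value F z L.
Proof.
  intros Hv; pose proof Hv as (Hd & [M HM] & _).
  exists (prim v); split.
  - split; [exact Hv |]; apply prim_cderiv, Hd.
  - apply ext_value_of_lipschitz with M; [| apply prim_lipschitz; assumption].
    eapply Rle_trans; [apply Cmod_ge_0 | apply (HM 0%C)].
    unfold Disc; rewrite Cmod_0; lra.
Qed.

(** * Polynomials and the separation of points *)

Inductive cpoly : Type :=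
  | PC (c : C)
  | PX
  | PAdd (p q : cpoly)
  | PMul (p q : cpoly).

Fixpoint peval (p : cpoly) (z : C) : C :=
  match p with
  | PC c => c
  | PX => z
  | PAdd p q => (peval p z + peval q z)%C
  | PMul p q => (peval p z * peval q z)%C
  end.

Fixpoint pderiv (p : cpoly) : cpoly :=
  match p with
  | PC _ => PC 0
  | PX => PC 1
  | PAdd p q => PAdd (pderiv p) (pderiv q)
  | PMul p q => PAdd (PMul (pderiv p) q) (PMul p (pderiv q))
  end.

Fixpoint pbound (p : cpoly) : R :=
  match p with
  | PC c => Cmod c
  | PX => 1
  | PAdd p q => pbound p + pbound q
  | PMul p q => pbound p * pbound q
  end.

Definition plin (a : C) : cpoly := PAdd PX (PC (- a)).

Lemma peval_cderiv (p : cpoly) (z : C) : cderiv (peval p) z (peval (pderiv p) z).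
Proof.
  apply cderiv_of_is_derive.
  induction p as [c | | p IHp q IHq | p IHp q IHq]; simpl.
  - exact (is_derive_const (K := C_AbsRing) (V := AbsRing_NormedModule C_AbsRing) c z).
  - exact (is_derive_id (K := C_AbsRing) z).
  - apply (is_derive_plus _ _ z _ _ IHp IHq).
  - apply (is_derive_mult _ _ z _ _ IHp IHq Cmult_comm).
Qed.

Lemma Cmod_peval_le (p : cpoly) (z : C) : Cmod z <= 1 -> Cmod (peval p z) <= pbound p.
Proof.
  intros Hz; induction p as [c | | p IHp q IHq | p IHp q IHq]; simpl; try lra.
  - eapply Rle_trans; [apply Cmod_triangle | lra].
  - rewrite Cmod_mult; apply Rmult_le_compat; auto; apply Cmod_ge_0.
Qed.

Lemma ext_value_peval (p : cpoly) (z : C) : ext_value (peval p) z (peval p z).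
Proof.
  pose proof (ccont_of_cderiv (peval p) z (ex_intro _ _ (peval_cderiv p z))) as Hc.
  intros P [eps HP]; destruct (Hc eps (cond_pos eps)) as [del [Hdel Hw]].
  exists (mkposreal (del / 2) ltac:(lra)); intros w Hb _.
  apply HP, ball_of_Cmod_lt, Hw; pose proof (Cmod_lt_of_ball _ _ _ Hb); simpl in *; lra.
Qed.

Definition disc_restrict (f : C -> C) (z : C) : C := if Rlt_dec (Cmod z) 1 then f z else 0%C.

Definition zH : C -> C := disc_restrict (fun z => z).

Lemma disc_restrict_Disc (f : C -> C) (z : C) : Disc z -> disc_restrict f z = f z.
Proof. unfold disc_restrict, Disc; intros H; destruct Rlt_dec; [reflexivity | contradiction]. Qed.

Lemma cderiv_disc_restrict (f : C -> C) (z l : C) : Disc z -> cderiv f z l -> cderiv (disc_restrict f) z l.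
Proof.
  intros Hz Hd; apply cderiv_Cmod; intros eps He.
  destruct (proj1 (cderiv_Cmod f z l) Hd eps He) as [del [Hdel Hw]].
  exists (Rmin del (1 - Cmod z)); split; [apply Rmin_pos; unfold Disc in Hz; lra |].
  intros w Hw'; pose proof (Rmin_l del (1 - Cmod z)); pose proof (Rmin_r del (1 - Cmod z)).
  assert (Disc w).
  { unfold Disc; replace w with (z + (w - z))%C by ring.
    eapply Rle_lt_trans; [apply Cmod_triangle | lra]. }
  rewrite !disc_restrict_Disc by assumption; apply Hw; lra.
Qed.

Lemma Hinf_peval (p : cpoly) : Hinf (disc_restrict (peval p)).
Proof.
  split; [| split].
  - intros z Hz; exists (peval (pderiv p) z); apply cderiv_disc_restrict, peval_cderiv; exact Hz.
  - exists (pbound p); intros z Hz; rewrite disc_restrict_Disc by exact Hz.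
    apply Cmod_peval_le; unfold Disc in Hz; lra.
  - intros z Hz; unfold disc_restrict, Disc in *; destruct Rlt_dec; [contradiction | reflexivity].
Qed.

Lemma MaxIdeal_peval (eta : (C -> C) -> C) : MaxIdeal eta ->
  forall p, eta (disc_restrict (peval p)) = peval p (eta zH).
Proof.
  intros (_ & Hadd & Hscal & Hmul & Hone).
  induction p as [c | | p IHp q IHq | p IHp q IHq].
  - transitivity (eta (fun z => c * one_H z)%C).
    + f_equal; apply functional_extensionality; intros z.
      unfold disc_restrict, one_H; simpl; destruct Rlt_dec; ring.
    + rewrite Hscal, Hone by exact (Hinf_peval (PC 1)); simpl; ring.
  - reflexivity.
  - transitivity (eta (fun z => disc_restrict (peval p) z + disc_restrict (peval q) z)%C).
    + f_equal; apply functional_extensionality; intros z.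
      unfold disc_restrict; simpl; destruct Rlt_dec; ring.
    + rewrite Hadd, IHp, IHq by apply Hinf_peval; reflexivity.
  - transitivity (eta (fun z => disc_restrict (peval p) z * disc_restrict (peval q) z)%C).
    + f_equal; apply functional_extensionality; intros z.
      unfold disc_restrict; simpl; destruct Rlt_dec; ring.
    + rewrite Hmul, IHp, IHq by apply Hinf_peval; reflexivity.
Qed.

Lemma MaxIdeal_ext (eta1 eta2 : (C -> C) -> C) : MaxIdeal eta1 -> MaxIdeal eta2 ->
  (forall v, Hinf v -> eta1 v = eta2 v) -> eta1 = eta2.
Proof.
  intros [Z1 _] [Z2 _] Heq; apply functional_extensionality; intros v.
  destruct (classic (Hinf v)) as [Hv | Hv]; [apply Heq, Hv | rewrite Z1, Z2 by exact Hv; reflexivity].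
Qed.

Lemma separating_poly_noncritical (z1 z2 s1 s2 : C) : z1 <> z2 -> z1 <> s1 -> z1 <> s2 ->
  exists p, peval (pderiv p) s1 = 0%C /\ peval (pderiv p) s2 = 0%C /\ peval p z1 <> peval p z2.
Proof.
  intros H12 H1 H2; set (q := PMul (plin s1) (plin s2)).
  exists (PMul (plin z2) (PMul q q)); split; [simpl; ring | split; [simpl; ring |]].
  replace (peval (PMul (plin z2) (PMul q q)) z2) with (RtoC 0) by (simpl; ring).
  simpl; repeat apply Cmult_neq_0; apply Cminus_eq_contra; assumption.
Qed.

Lemma separating_poly (z1 z2 s1 s2 : C) : z1 <> z2 ->
  exists p, peval (pderiv p) s1 = 0%C /\ peval (pderiv p) s2 = 0%C /\ peval p z1 <> peval p z2.
Proof.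
  intros H12.
  destruct (classic (z1 <> s1 /\ z1 <> s2)) as [[H1 H2] | H1]; [now apply separating_poly_noncritical |].
  destruct (classic (z2 <> s1 /\ z2 <> s2)) as [[H3 H4] | H2].
  { destruct (separating_poly_noncritical z2 z1 s1 s2) as (p & D1 & D2 & Hp); auto.
    exists p; auto. }
  (* Hermite interpolation: [p' = 6 (X - z1) (X - z2)]. *)
  set (p := PMul (PMul (plin z2) (plin z2)) (PAdd (PAdd (plin z1) (plin z1)) (PC (z2 - z1)))).
  assert (Dp : forall s, s = z1 \/ s = z2 -> peval (pderiv p) s = 0%C)
    by (intros s [-> | ->]; simpl; ring).
  assert (E1 : z1 = s1 \/ z1 = s2) by tauto.
  assert (E2 : z2 = s1 \/ z2 = s2) by tauto.
  exists p; split; [| split];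
    [apply Dp; destruct E1, E2; first [left; congruence | right; congruence | congruence] .. |].
  replace (peval p z2) with (RtoC 0) by (simpl; ring).
  replace (peval p z1) with ((z1 - z2) * (z1 - z2) * (z2 - z1))%C by (simpl; ring).
  repeat apply Cmult_neq_0; apply Cminus_eq_contra; auto.
Qed.

Definition separated_in_B (x1 x2 : C * ((C -> C) -> C) * C) : Prop :=
  exists f g : C -> C,
    Sinf_with_deriv f g /\
    let '(z1, eta1, w1) := x1 in
    let '(z2, eta2, w2) := x2 in
    exists L1 L2 : C,
      ext_value f z1 L1 /\ ext_value f z2 L2 /\
      (L1 + eta1 g * w1)%C <> (L2 + eta2 g * w2)%C.

Lemma separated_of_poly (p : cpoly) (z1 z2 w1 w2 : C) (eta1 eta2 : (C -> C) -> C) :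
  MaxIdeal eta1 -> MaxIdeal eta2 ->
  (peval p z1 + peval (pderiv p) (eta1 zH) * w1 <> peval p z2 + peval (pderiv p) (eta2 zH) * w2)%C ->
  separated_in_B (z1, eta1, w1) (z2, eta2, w2).
Proof.
  intros M1 M2 Hne; exists (peval p), (disc_restrict (peval (pderiv p))); split.
  - split; [apply Hinf_peval |]; intros z Hz.
    rewrite disc_restrict_Disc by exact Hz; apply peval_cderiv.
  - exists (peval p z1), (peval p z2); split; [apply ext_value_peval |]; split; [apply ext_value_peval |].
    rewrite !MaxIdeal_peval by assumption; exact Hne.
Qed.

Lemma separated_of_functional (z w : C) (eta1 eta2 : (C -> C) -> C) (v : C -> C) :
  Cmod z <= 1 -> w <> 0%C -> Hinf v -> eta1 v <> eta2 v ->
  separated_in_B (z, eta1, w) (z, eta2, w).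
Proof.
  intros Hz Hw Hv Hne.
  destruct (Hinf_primitive v Hv) as [F [HF Hext]]; destruct (Hext z Hz) as [L HL].
  exists F, v; split; [exact HF |]; exists L, L; split; [exact HL |]; split; [exact HL |].
  intros E; apply (Cmult_neq_0 _ _ (Cminus_eq_contra _ _ Hne) Hw).
  replace ((eta1 v - eta2 v) * w)%C with ((L + eta1 v * w) - (L + eta2 v * w))%C by ring.
  rewrite E; ring.
Qed.

Theorem proposition2p1 :
  forall (a : C) (T : C -> Prop),
    Disc a ->
    ((forall z, T z <-> Circle z) \/ (forall z, T z <-> z = a)) ->
    forall x1 x2 : C * ((C -> C) -> C) * C,
      in_X T x1 -> in_X T x2 -> x1 <> x2 ->
      exists f g : C -> C,
        Sinf_with_deriv f g /\
        let '(z1, eta1, w1) := x1 in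
        let '(z2, eta2, w2) := x2 in
        exists L1 L2 : C,
          ext_value f z1 L1 /\ ext_value f z2 L2 /\
          (L1 + eta1 g * w1)%C <> (L2 + eta2 g * w2)%C.
Proof.
  intros a T Ha HT [[z1 eta1] w1] [[z2 eta2] w2] (T1 & [M1 _] & C1) (T2 & [M2 _] & C2) Hne.
  change (separated_in_B (z1, eta1, w1) (z2, eta2, w2)).
  destruct (classic (z1 = z2)) as [<- | Hz].
  - destruct (classic (w1 = w2)) as [<- | Hw].
    + assert (Hclosed : Cmod z1 <= 1)
        by (destruct HT as [HT | HT]; apply HT in T1; [unfold Circle in T1 | subst; unfold Disc in Ha]; lra).
      assert (Hw1 : w1 <> 0%C) by (intros ->; unfold Circle in C1; rewrite Cmod_0 in C1; lra).
      destruct (classic (exists v, Hinf v /\ eta1 v <> eta2 v)) as [[v [Hv Hv']] | Hno].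
      * apply (separated_of_functional z1 w1 eta1 eta2 v); assumption.
      * exfalso; apply Hne; f_equal; f_equal; apply MaxIdeal_ext; try assumption.
        intros v Hv; apply NNPP; intros Hv'; apply Hno; exists v; auto.
    + apply (separated_of_poly PX); try assumption; simpl.
      intros E; apply Hw; replace w1 with ((z1 + 1 * w1) - z1)%C by ring; rewrite E; ring.
  - destruct (separating_poly z1 z2 (eta1 zH) (eta2 zH) Hz) as (p & D1 & D2 & Hp).
    apply (separated_of_poly p); try assumption; rewrite D1, D2.
    intros E; apply Hp; replace (peval p z1) with (peval p z1 + 0 * w1)%C by ring; rewrite E; ring.
Qed.
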